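(* Let $q=2^{v}$ and $s=2^{k}$ with $1\le k\le v$, let $n=(s-1)q+s$, and let $\mathcal{K}$ be a maximal $(n,s)$-arc in $PG(2,q)$. Then $\mathcal{K}$ is an optimal $(1,\mu)$-saturating $n$-set with $\mu=\frac{1}{2}(s-1)n$. Moreover, a linear code $C$ over $\mathbb{F}_q$ corresponding to $\mathcal{K}$ is an $[n,n-3]_q$ code with covering radius $2$, and $C$ is a $(2,\mu)$-PMCF code if $s=2$ and a $(2,\mu)$-APMCF code if $s\ge 4$.
   Context: $PG(N,q)$ is the $N$-dimensional projective space over $\mathbb{F}_q$. A maximal $(n,s)$-arc in $PG(2,q)$ is a set of $n$ points such that every line meets it in either $0$ or $s$ points. For a point set $S$, a secant of $S$ is a line $\ell$ with $|\ell\cap S|\ge2$, counted with multiplicity $\binom{|\ell\cap S|}{2}$. A set $S$ of $n$ points of $PG(N,q)$ is a $(1,\mu)$-saturating $n$-set if (M1) $S$ spans $PG(N,q)$, (M2) $S\neq PG(N,q)$, and (M3) every point $Q\notin S$ lies on secants of $S$ whose multiplicities sum to at least $\mu$; it is optimal if for every $Q\notin S$ this sum is exactly $\mu$. A linear code of length $n$ over $\mathbb{F}_q$ corresponds to $S=\{P_1,\dots,P_n\}\subset PG(N,q)$ if it has a parity-check matrix whose $i$-th column is a homogeneous coordinate vector of $P_i$. An $[n,k]_q$ code is a linear code of length $n$ and dimension $k$; its covering radius $R$ is $\max_{x\in\mathbb{F}_q^n} d(x,C)$ (Hamming distance), and $d(C)$ is its minimum distance. A code $C$ with covering radius $R$ is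 an $(R,\mu)$-APMCF code if every $x\in\mathbb{F}_q^n$ with $d(x,C)=R$ is at distance exactly $R$ from exactly $\mu$ codewords; it is an $(R,\mu)$-PMCF code if in addition $d(C)\ge 2R$. *)

From HB Require Import structures.
From mathcomp Require Import all_boot all_order all_algebra.
Set Implicit Arguments. Unset Strict Implicit. Unset Printing Implicit Defensive.
Import GRing.Theory.
Local Open Scope ring_scope.

(* Projective space PG(N, F): a point is a 1-dimensional subspace of F^(N+1),
   a line is a 2-dimensional subspace; a subspace is represented canonically
   by the square matrix <<U>>%MS (mxalgebra's canonical generator). *)
Section PG.
Variables (F : finFieldType) (N : nat).

Definition PGpoints : {set 'M[F]_N.+1} :=
  [set U | (\rank U == 1)%N && (<<U>>%MS == U)].
Definition PGlines : {set 'M[F]_N.+1} :=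
  [set U | (\rank U == 2)%N && (<<U>>%MS == U)].

Definition meetL (L : 'M[F]_N.+1) (S : {set 'M[F]_N.+1}) : {set 'M[F]_N.+1} :=
  [set P in S | (P <= L)%MS].

Definition secant_mult_sum (S : {set 'M[F]_N.+1}) (Q : 'M[F]_N.+1) : nat :=
  (\sum_(L in PGlines | (Q <= L)%MS) 'C(#|meetL L S|, 2))%N.

Definition spansPG (S : {set 'M[F]_N.+1}) : bool :=
  (\rank (\sum_(P in S) P)%MS == N.+1)%N.

Definition saturating_nset (n : nat) (S : {set 'M[F]_N.+1}) (mu : nat) : Prop :=
  [/\ S \subset PGpoints, #|S| = n,
      spansPG S, S != PGpoints &
      forall Q, Q \in PGpoints :\: S -> (mu <= secant_mult_sum S Q)%N].

Definition optimal_saturating_nset (n : nat) (S : {set 'M[F]_N.+1}) (mu : nat) : Prop :=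
  saturating_nset n S mu /\
  forall Q, Q \in PGpoints :\: S -> secant_mult_sum S Q = mu.

Definition col_point n (H : 'M[F]_(N.+1, n)) (i : 'I_n) : 'M[F]_N.+1 :=
  <<(col i H)^T>>%MS.

Definition corresponds n (H : 'M[F]_(N.+1, n)) (S : {set 'M[F]_N.+1}) : Prop :=
  [/\ forall i, col i H != 0,
      injective (col_point H) &
      [set col_point H i | i : 'I_n] = S].
End PG.

Definition maximal_arc (F : finFieldType) (n s : nat) (K : {set 'M[F]_3}) : Prop :=
  [/\ K \subset PGpoints F 2, #|K| = n &
      forall L, L \in PGlines F 2 -> #|meetL L K| = 0%N \/ #|meetL L K| = s].

Section Codes.
Variables (F : finFieldType) (n : nat).

(* the linear code with parity-check matrix H : its row space *)
Definition code_of m (H : 'M[F]_(m, n)) : 'M[F]_n := kermx H^T.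

Definition hdist (x y : 'rV[F]_n) : nat := #|[set i : 'I_n | x 0 i != y 0 i]|.

Definition dist_code (C : 'M[F]_n) (x : 'rV[F]_n) : nat :=
  \big[minn/n]_(c : 'rV[F]_n | (c <= C)%MS) hdist x c.

Definition covering_radius (C : 'M[F]_n) : nat :=
  (\max_(x : 'rV[F]_n) dist_code C x)%N.

(* minimum distance (n+1 plays the role of infinity for the trivial code) *)
Definition min_dist (C : 'M[F]_n) : nat :=
  \big[minn/n.+1]_(p : 'rV[F]_n * 'rV[F]_n |
        [&& (p.1 <= C)%MS, (p.2 <= C)%MS & p.1 != p.2]) hdist p.1 p.2.

Definition APMCF (R mu : nat) (C : 'M[F]_n) : Prop :=
  covering_radius C = R /\
  forall x : 'rV[F]_n, dist_code C x = R ->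
    #|[set c : 'rV[F]_n | (c <= C)%MS && (hdist x c == R)]| = mu.

Definition PMCF (R mu : nat) (C : 'M[F]_n) : Prop :=
  APMCF R mu C /\ (2 * R <= min_dist C)%N.
End Codes.

From HB Require Import structures.
From mathcomp Require Import all_boot all_order all_algebra.
Set Implicit Arguments. Unset Strict Implicit. Unset Printing Implicit Defensive.
Import GRing.Theory.
Local Open Scope ring_scope.

(* Through a point Q off the arc K every point of K lies on exactly one line,
   and each line through Q meets K in 0 or s points, so the secants through Q
   have total multiplicity (s-1)|K|/2 whatever Q is.
   For the code, a vector is within distance 1 of C exactly when its syndrome
   is 0 or spans a point of K.  Otherwise the syndrome spans a point Q off K,
   and the weight-2 vectors with that syndrome correspond to the pairs of
   points of K collinear with Q: there are (s-1)n/2 > 0 of them, which gives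
   covering radius 2 and the number of codewords at distance 2.  Two points of
   K span a line meeting K in s < n points, so K spans the plane (H has rank 3)
   and, as s <= q, misses a point.  When s = 2 no three points of K are
   collinear, so every three columns of H are independent. *)

Lemma card_set_sum (T : finType) (A : {pred T}) (p : pred T) :
  #|[set x in A | p x]| = (\sum_(x in A) p x)%N.
Proof.
rewrite -sum1_card big_mkcond [RHS]big_mkcond; apply: eq_bigr => x _.
by rewrite inE; case: (x \in A); case: (p x).
Qed.

Lemma sum_card_incidence (I J : finType) (A : {pred I}) (B : {pred J})
    (R : I -> J -> bool) :
  (\sum_(i in A) #|[set j in B | R i j]| = \sum_(j in B) #|[set i in A | R i j]|)%N.
Proof.
under eq_bigr do rewrite card_set_sum; rewrite exchange_big.
by apply: eq_bigr => j _; rewrite card_set_sum.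
Qed.

Lemma bigminn_le_cond (I : finType) (P : pred I) (f : I -> nat) m i :
  P i -> (\big[minn/m]_(j | P j) f j <= f i)%N.
Proof.
move=> Pi; move: (mem_index_enum i); elim: (index_enum I) => //= j r IH.
rewrite inE big_cons => /orP[/eqP <-|/IH le_r]; first by rewrite Pi geq_minl.
by case: (P j) => //; apply: leq_trans le_r; apply: geq_minr.
Qed.

Section ProjectiveSpace.
Variables (F : finFieldType) (N : nat).
Local Notation pts := (PGpoints F N).
Local Notation lns := (PGlines F N).
Implicit Types (P Q L : 'M[F]_N.+1) (u v : 'rV[F]_N.+1).

Lemma PGpoint_rank P : P \in pts -> \rank P = 1%N.
Proof. by rewrite inE => /andP[/eqP]. Qed.

Lemma PGpoint_genmx P : P \in pts -> <<P>>%MS = P.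
Proof. by rewrite inE => /andP[_ /eqP]. Qed.

Lemma genmx_rV_PGpoint u : u != 0 -> <<u>>%MS \in pts.
Proof. by move=> u0; rewrite inE genmx_id eqxx genmxE rank_rV u0. Qed.

Lemma PGpoint_sub_eq P Q : P \in pts -> Q \in pts -> (P <= Q)%MS -> P = Q.
Proof.
move=> hP hQ sPQ; rewrite -(PGpoint_genmx hP) -(PGpoint_genmx hQ); apply/genmxP.
by rewrite -(mxrank_leqif_eq sPQ).2 !PGpoint_rank.
Qed.

Lemma genmx_nz_row P : P \in pts -> <<nz_row P>>%MS = P.
Proof.
move=> hP; apply: PGpoint_sub_eq; rewrite ?genmxE ?nz_row_sub //.
by rewrite genmx_rV_PGpoint // nz_row_eq0 -mxrank_eq0 PGpoint_rank.
Qed.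

Lemma nz_row_PGpoint_neq0 P : P \in pts -> nz_row P != 0.
Proof. by move=> hP; rewrite nz_row_eq0 -mxrank_eq0 PGpoint_rank. Qed.

Lemma rV_free2 u v a b : u != 0 -> v != 0 -> <<u>>%MS != <<v>>%MS ->
  a *: u + b *: v = 0 -> a = 0 /\ b = 0.
Proof.
move=> u0 v0 nuv; have [->|a0 /eqP] := eqVneq a 0.
  by rewrite scale0r add0r => /eqP; rewrite scalemx_eq0 (negbTE v0) orbF => /eqP.
rewrite addr_eq0 => /eqP uv; case/negP: nuv; apply/eqP/PGpoint_sub_eq;
  rewrite ?genmx_rV_PGpoint // !genmxE -(eqmx_scale _ a0) uv eqmx_opp scalemx_sub //.
Qed.

Lemma mxrank_adds_PGpoints P Q : P \in pts -> Q \in pts -> P != Q ->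
  \rank (P + Q)%MS = 2%N.
Proof.
move=> hP hQ nPQ; have := mxrank_sum_cap P Q; rewrite (PGpoint_rank hP) (PGpoint_rank hQ).
have : (\rank (P :&: Q) <= 1)%N by rewrite -(PGpoint_rank hP) mxrankS ?capmxSl.
case hr: (\rank (P :&: Q)) => [|[|//]] _; first by rewrite addn0.
case/negP: nPQ; apply/eqP/PGpoint_sub_eq => //; apply: submx_trans (capmxSr P Q).
by rewrite -(mxrank_leqif_sup (capmxSl P Q)).2 hr PGpoint_rank.
Qed.

Definition PGjoin P Q := <<(P + Q)%MS>>%MS.

Lemma PGjoin_line P Q : P \in pts -> Q \in pts -> P != Q -> PGjoin P Q \in lns.
Proof. by move=> *; rewrite inE genmx_id eqxx genmxE mxrank_adds_PGpoints. Qed.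

Lemma PGjoin_subl P Q : (P <= PGjoin P Q)%MS.
Proof. by rewrite genmxE addsmxSl. Qed.

Lemma PGjoin_subr P Q : (Q <= PGjoin P Q)%MS.
Proof. by rewrite genmxE addsmxSr. Qed.

Lemma PGline_eq_join P Q L : P \in pts -> Q \in pts -> P != Q -> L \in lns ->
  (P <= L)%MS -> (Q <= L)%MS -> L = PGjoin P Q.
Proof.
move=> hP hQ nPQ; rewrite inE => /andP[/eqP rL /eqP gL] sP sQ.
have sPQ : (P + Q <= L)%MS by rewrite addsmx_sub sP sQ.
rewrite -gL; apply/esym/genmxP.
by rewrite -(mxrank_leqif_eq sPQ).2 rL mxrank_adds_PGpoints.
Qed.

Lemma PGjoinE P Q L : P \in pts -> Q \in pts -> P != Q ->
  [&& L \in lns, P <= L & Q <= L]%MS = (L == PGjoin P Q).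
Proof.
move=> hP hQ nPQ; apply/idP/eqP => [/and3P[]|->]; first exact: PGline_eq_join.
by rewrite PGjoin_line // PGjoin_subl PGjoin_subr.
Qed.

Lemma card_PGjoin_points P Q : P \in pts -> Q \in pts -> P != Q ->
  (#|F|.+1 <= #|meetL (PGjoin P Q) pts|)%N.
Proof.
move=> hP hQ nPQ; set u := nz_row P; set v := nz_row Q.
have u0 : u != 0 by apply: nz_row_PGpoint_neq0.
have v0 : v != 0 by apply: nz_row_PGpoint_neq0.
have nuv : <<u>>%MS != <<v>>%MS by rewrite !genmx_nz_row.
(* The points <<u + a v>>, a in F, and Q are #|F|.+1 distinct points of the line. *)
pose f a := <<u + a *: v>>%MS.
have f_inj : injective f.
  move=> a b /genmxP/andP[/sub_rVP[c hc] _].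
  have : (1 - c) *: u + (a - c * b) *: v = 0.
    by rewrite !scalerBl scale1r -scalerA addrACA -opprD -scalerDr -hc subrr.
  case/(rV_free2 u0 v0 nuv) => /eqP; rewrite subr_eq0 => /eqP <- /eqP.
  by rewrite mul1r subr_eq0 => /eqP.
have Q_notin_f : Q \notin [set f a | a in setT].
  apply/imsetP => -[a _]; rewrite -(genmx_nz_row hQ) => /genmxP/andP[_ /sub_rVP[c hc]].
  have : 1 *: u + (a - c) *: v = 0 by rewrite scale1r scalerBl addrA -hc subrr.
  by case/(rV_free2 u0 v0 nuv) => /eqP; rewrite oner_eq0.
have f_sub : Q |: [set f a | a in setT] \subset meetL (PGjoin P Q) pts.
  apply/subsetP => R /setU1P[->|/imsetP[a _ ->]]; rewrite [_ \in meetL _ _]inE.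
    by rewrite hQ PGjoin_subr.
  rewrite genmx_rV_PGpoint; last first.
    by rewrite -[u]scale1r; apply/eqP => /(rV_free2 u0 v0 nuv)[/eqP]; rewrite oner_eq0.
  rewrite genmxE /PGjoin genmxE -(genmx_nz_row hP) -(genmx_nz_row hQ).
  by rewrite (adds_eqmx (genmxE _) (genmxE _)) addmx_sub_adds ?scalemx_sub.
by have := subset_leq_card f_sub; rewrite cardsU1 Q_notin_f card_imset // cardsT.
Qed.

End ProjectiveSpace.

Section Arc.
Variables (F : finFieldType) (N : nat) (K : {set 'M[F]_N.+1}) (s : nat).
Local Notation pts := (PGpoints F N).
Local Notation lns := (PGlines F N).
Hypothesis Kpts : K \subset pts.
Hypothesis Karc : forall L, L \in lns -> #|meetL L K| = 0%N \/ #|meetL L K| = s.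

Lemma sum_card_meetL_through Q : Q \in pts -> Q \notin K ->
  (\sum_(L in lns | (Q <= L)%MS) #|meetL L K|)%N = #|K|.
Proof.
move=> hQ QK; rewrite (sum_card_incidence [pred L in lns | Q <= L]%MS) -sum1_card.
apply: eq_bigr => P PK; have hP := subsetP Kpts P PK.
have nQP : Q != P by apply: contraNneq QK => ->.
rewrite -(cards1 (PGjoin Q P)); apply: eq_card => L.
by rewrite in_set1 -PGjoinE // in_set /= andbA.
Qed.

Lemma secant_mult_sum_arc Q : Q \in pts -> Q \notin K ->
  (2 * secant_mult_sum K Q = (s - 1) * #|K|)%N.
Proof.
move=> hQ QK; rewrite -(sum_card_meetL_through hQ QK) !big_distrr /=.
apply: eq_bigr => L /andP[hL _]; case: (Karc hL) => ->; first by rewrite muln0.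
by rewrite mulnC bin_ffact ffactnS ffactn1 subn1 mulnC.
Qed.

Lemma arc_card_meetL L P : L \in lns -> P \in K -> (P <= L)%MS -> #|meetL L K| = s.
Proof.
move=> hL PK PL; case: (Karc hL) => // /eqP; rewrite cards_eq0 => /eqP meet0.
by have := in_set0 P; rewrite -meet0 inE PK PL.
Qed.

Lemma arc_card_meet_join P Q : P \in K -> Q \in K -> P != Q ->
  #|meetL (PGjoin P Q) K| = s.
Proof.
move=> PK QK nPQ; apply: (arc_card_meetL _ PK (PGjoin_subl _ _)).
exact: PGjoin_line (subsetP Kpts P PK) (subsetP Kpts Q QK) nPQ.
Qed.

Lemma arc2_meet_join P Q : s = 2%N -> P \in K -> Q \in K -> P != Q ->
  meetL (PGjoin P Q) K = [set P; Q].
Proof.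
move=> s2 PK QK nPQ; apply/esym/eqP; rewrite eqEcard cards2 nPQ.
rewrite arc_card_meet_join // s2 leqnn andbT subUset !sub1set !inE PK QK.
by rewrite PGjoin_subl PGjoin_subr.
Qed.

Lemma arc_exists_off_join P Q : (s < #|K|)%N -> P \in K -> Q \in K -> P != Q ->
  exists2 R, R \in K & ~~ (R <= PGjoin P Q)%MS.
Proof.
move=> sK PK QK nPQ; apply/exists_inP; rewrite -negb_forall_in.
apply: contraTN sK => /forall_inP onL; rewrite -leqNgt -(arc_card_meet_join PK QK nPQ).
by apply: subset_leq_card; apply/subsetP => R RK; rewrite inE RK onL.
Qed.

Lemma arc_neq_PGpoints : (1 < #|K|)%N -> (s <= #|F|)%N -> K != pts.
Proof.
case/card_gt1P => P [Q [PK QK nPQ]] sF; apply: contraTneq sF => Kall; rewrite -ltnNge.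
rewrite -(arc_card_meet_join PK QK nPQ) Kall.
by apply: card_PGjoin_points; rewrite // -Kall.
Qed.

End Arc.

Lemma spansPG_off_join (F : finFieldType) (K : {set 'M[F]_3}) P Q R :
  K \subset PGpoints F 2 -> P \in K -> Q \in K -> R \in K -> P != Q ->
  ~~ (R <= PGjoin P Q)%MS -> spansPG K.
Proof.
move=> Kpts PK QK RK nPQ offR; rewrite /spansPG eqn_leq rank_leq_col /=.
have rPQ : \rank (PGjoin P Q) = 2%N.
  by rewrite genmxE mxrank_adds_PGpoints ?(subsetP Kpts).
have ltPQR : (PGjoin P Q < PGjoin P Q + R)%MS.
  by rewrite ltmxE addsmxSl addsmx_sub submx_refl /= offR.
have := rank_ltmx ltPQR; rewrite rPQ => /leq_trans; apply; apply: mxrankS.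
by rewrite addsmx_sub genmxE addsmx_sub !(sumsmx_sup _ _ (submx_refl _)).
Qed.

Lemma arc_spansPG (F : finFieldType) (K : {set 'M[F]_3}) s :
  K \subset PGpoints F 2 ->
  (forall L, L \in PGlines F 2 -> #|meetL L K| = 0%N \/ #|meetL L K| = s) ->
  (1 < #|K|)%N -> (s < #|K|)%N -> spansPG K.
Proof.
move=> Kpts Karc /card_gt1P[P [Q [PK QK nPQ]]] sK.
have [R RK offR] := arc_exists_off_join Kpts Karc sK PK QK nPQ.
exact: spansPG_off_join Kpts PK QK RK nPQ offR.
Qed.

Section ParityCheck.
Variables (F : finFieldType) (K : {set 'M[F]_3}) (s n : nat) (H : 'M[F]_(3, n)).
Local Notation pts := (PGpoints F 2).
Local Notation lns := (PGlines F 2).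
Local Notation C := (code_of H).
Local Notation hcol i := (row i H^T).
Local Notation hpt := (col_point H).
Hypothesis Kpts : K \subset pts.
Hypothesis Karc : forall L, L \in lns -> #|meetL L K| = 0%N \/ #|meetL L K| = s.
Hypothesis HK : corresponds H K.

Lemma hptE i : hpt i = <<hcol i>>%MS.
Proof. by rewrite /col_point tr_col. Qed.

Lemma hcol_neq0 i : hcol i != 0.
Proof. by case: HK => col0 _ _; rewrite -tr_col trmx_eq0. Qed.

Lemma hpt_inj : injective hpt.
Proof. by case: HK. Qed.

Lemma hpt_in_K i : hpt i \in K.
Proof. by case: HK => _ _ <-; apply: imset_f. Qed.

Lemma hpt_PGpoint i : hpt i \in pts.
Proof. exact: subsetP Kpts _ (hpt_in_K i). Qed.

Lemma in_K_hpt P : P \in K -> exists i, P = hpt i.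
Proof. by case: HK => _ _ <- /imsetP[i _ ->]; exists i. Qed.

Lemma hcol_free2 i j a b : i != j -> a *: hcol i + b *: hcol j = 0 -> a = 0 /\ b = 0.
Proof.
by move=> nij; apply: rV_free2; rewrite ?hcol_neq0 // -!hptE (inj_eq hpt_inj).
Qed.

Definition syndrome (x : 'rV[F]_n) : 'rV[F]_3 := x *m H^T.
Definition supp (e : 'rV[F]_n) : {set 'I_n} := [set i | e 0 i != 0].
Definition wt (e : 'rV[F]_n) : nat := #|supp e|.

Lemma hdist_wt x c : hdist x c = wt (x - c).
Proof. by apply: eq_card => i; rewrite !inE !mxE subr_eq0. Qed.

Lemma code_syndrome c : (c <= C)%MS = (syndrome c == 0).
Proof. by rewrite /code_of sub_kermx. Qed.

Lemma syndromeB x y : syndrome (x - y) = syndrome x - syndrome y.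
Proof. by rewrite /syndrome mulmxBl. Qed.

Lemma supp_sub_eq0 e (T : {set 'I_n}) t : supp e \subset T -> t \notin T -> e 0 t = 0.
Proof. by move=> /subsetP eT; apply: contraNeq => et; apply: eT; rewrite inE. Qed.

Lemma syndrome_supp_sub e (T : {set 'I_n}) : supp e \subset T ->
  syndrome e = \sum_(t in T) e 0 t *: hcol t.
Proof.
move=> eT; rewrite /syndrome mulmx_sum_row [RHS]big_mkcond /=; apply: eq_bigr => t _.
by case: ifP => // /negbT /(supp_sub_eq0 eT) ->; rewrite scale0r.
Qed.

Lemma syndrome_delta i a : syndrome (a *: 'e_i) = a *: hcol i.
Proof. by rewrite /syndrome -scalemxAl -rowE. Qed.

Lemma supp_delta i a : supp (a *: 'e_i) \subset [set i].
Proof.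
by apply/subsetP => t; rewrite !inE !mxE eqxx; case: (t == i); rewrite ?mulr0 ?eqxx.
Qed.

Lemma wt_le1_syndromeP sg :
  (exists2 e, wt e <= 1 & syndrome e = sg)%N <-> sg = 0 \/ <<sg>>%MS \in K.
Proof.
split=> [[e]|].
  rewrite /wt leq_eqVlt ltnS leqn0 => /orP[/cards1P[t et]|/eqP/cards0_eq e0] <-.
    right; have ett : e 0 t != 0 by move: (set11 t); rewrite -et inE.
    rewrite (syndrome_supp_sub (subxx _)) et big_set1 (eq_genmx (eqmx_scale _ ett)).
    by rewrite -hptE hpt_in_K.
  by left; rewrite (syndrome_supp_sub (subxx _)) e0 big_set0.
case=> [->|/in_K_hpt[i]].
  exists 0; last by rewrite /syndrome mul0mx.
  by rewrite /wt (_ : supp 0 = set0) ?cards0 //; apply/setP => t; rewrite !inE mxE eqxx.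
rewrite hptE => /genmxP/andP[/sub_rVP[a ->] _]; exists (a *: 'e_i).
  by rewrite /wt -[X in (_ <= X)%N](cards1 i) subset_leq_card ?supp_delta.
exact: syndrome_delta.
Qed.

Definition err2 i j a b : 'rV[F]_n := a *: 'e_i + b *: 'e_j.

Lemma syndrome_err2 i j a b : syndrome (err2 i j a b) = a *: hcol i + b *: hcol j.
Proof. by rewrite /syndrome mulmxDl -!scalemxAl -!rowE. Qed.

Lemma supp_err2 i j a b : i != j -> a != 0 -> b != 0 -> supp (err2 i j a b) = [set i; j].
Proof.
move=> nij a0 b0; apply/setP => t; rewrite !inE !mxE eqxx /=.
have [->|_] := eqVneq t i; first by rewrite (negbTE nij) mulr1 mulr0 addr0.
by have [_|_] := eqVneq t j; rewrite ?mulr0 ?mulr1 ?add0r ?addr0 ?eqxx.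
Qed.

Lemma supp_sub2_syndrome_eq0 d i j : i != j -> supp d \subset [set i; j] ->
  syndrome d = 0 -> d = 0.
Proof.
move=> nij dij; rewrite (syndrome_supp_sub dij) big_setU1 ?inE //= big_set1.
case/(hcol_free2 nij) => di dj; apply/rowP => t; rewrite mxE.
have [->|] := eqVneq t i; first by [].
have [-> //|ntj nti] := eqVneq t j.
by apply: (supp_sub_eq0 dij); rewrite !inE negb_or nti.
Qed.

Lemma supp_sub2_syndrome_inj e e' i j : i != j ->
  supp e \subset [set i; j] -> supp e' \subset [set i; j] ->
  syndrome e = syndrome e' -> e = e'.
Proof.
move=> nij eij e'ij same; apply/eqP; rewrite -subr_eq0; apply/eqP.
apply: (supp_sub2_syndrome_eq0 nij); last by rewrite syndromeB same subrr.
apply/subsetP => t; rewrite inE !mxE; apply: contraR => tij.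
by rewrite (supp_sub_eq0 eij) ?(supp_sub_eq0 e'ij) ?subr0.
Qed.

Section WeightTwoFibre.
Variable sg : 'rV[F]_3.
Hypotheses (sg0 : sg != 0) (sgK : <<sg>>%MS \notin K).
Local Notation Q := <<sg>>%MS.

Definition wt2_fibre := [set e | (wt e == 2%N) && (syndrome e == sg)].

Lemma hpt_neq_Q i : hpt i != Q.
Proof. by apply: contraNneq sgK => <-; apply: hpt_in_K. Qed.

Lemma syndrome_neq_scale_hcol i c : sg != c *: hcol i.
Proof.
apply: contraNneq sgK => sg_ci; rewrite (_ : Q = hpt i) ?hpt_in_K //.
apply: PGpoint_sub_eq; [exact: genmx_rV_PGpoint | exact: hpt_PGpoint |].
by rewrite hptE !genmxE sg_ci scalemx_sub.
Qed.

Lemma hpt_sub_join_Q i j : i != j ->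
  (hpt j <= PGjoin (hpt i) Q)%MS = (sg <= hcol i + hcol j)%MS.
Proof.
move=> nij; have Qp := genmx_rV_PGpoint sg0.
have nij' : hpt i != hpt j by rewrite (inj_eq hpt_inj).
have Lij := PGjoin_line (hpt_PGpoint i) (hpt_PGpoint j) nij'.
have LiQ := PGjoin_line (hpt_PGpoint i) Qp (hpt_neq_Q i).
have -> : (sg <= hcol i + hcol j)%MS = (Q <= PGjoin (hpt i) (hpt j))%MS.
  by rewrite genmxE /PGjoin genmxE !hptE (adds_eqmx (genmxE _) (genmxE _)).
apply/idP/idP => sub.
  by rewrite -(PGline_eq_join (hpt_PGpoint i) (hpt_PGpoint j) nij' LiQ
    (PGjoin_subl _ _) sub) PGjoin_subr.
by rewrite -(PGline_eq_join (hpt_PGpoint i) Qp (hpt_neq_Q i) Lij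
  (PGjoin_subl _ _) sub) PGjoin_subr.
Qed.

Lemma card_wt2_fibre_pair i j : i != j ->
  #|[set e in wt2_fibre | (i \in supp e) && (j \in supp e)]| =
  (hpt j <= PGjoin (hpt i) Q)%MS.
Proof.
move=> nij; rewrite hpt_sub_join_Q //; set S := [set e in _ | _].
have suppS e : e \in S -> supp e = [set i; j] /\ syndrome e = sg.
  rewrite in_set => /andP[]; rewrite in_set => /andP[/eqP w /eqP se] /andP[ei ej].
  split=> //.
  by apply/esym/eqP; rewrite eqEcard subUset !sub1set ei ej cards2 nij -[#|_|]/(wt e) w.
have [/sub_addsmxP[u sg_u]|nsub] := boolP (sg <= hcol i + hcol j)%MS; last first.
  apply/eqP; rewrite cards_eq0; apply/set0Pn => -[e /suppS[se sg_e]].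
  case/negP: nsub; rewrite -sg_e.
  rewrite (syndrome_supp_sub (_ : _ \subset [set i; j])) ?se // big_setU1 ?inE //= big_set1.
  by rewrite addmx_sub_adds ?scalemx_sub.
set a := u.1 0 0; set b := u.2 0 0.
have sg_ab : sg = a *: hcol i + b *: hcol j.
  by rewrite sg_u (mx11_scalar u.1) (mx11_scalar u.2) !mul_scalar_mx.
have a0 : a != 0.
  by apply: contra_neq (syndrome_neq_scale_hcol j b) => a0; rewrite sg_ab a0 scale0r add0r.
have b0 : b != 0.
  by apply: contra_neq (syndrome_neq_scale_hcol i a) => b0; rewrite sg_ab b0 scale0r addr0.
rewrite (_ : S = [set err2 i j a b]) ?cards1 //; apply/setP => e; rewrite in_set1.
apply/idP/eqP => [/suppS[se she]|->].
  apply: (supp_sub2_syndrome_inj nij); rewrite ?se ?supp_err2 //.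
  by rewrite she syndrome_err2.
rewrite in_set [_ \in wt2_fibre]in_set /wt supp_err2 // cards2 nij syndrome_err2 -sg_ab.
by rewrite !in_set2 !eqxx orbT.
Qed.

Lemma card_join_Q_others i :
  #|[set j | (j != i) && (hpt j <= PGjoin (hpt i) Q)%MS]| = (s - 1)%N.
Proof.
set L := PGjoin (hpt i) Q.
have Ls : #|meetL L K| = s.
  apply: (arc_card_meetL Karc _ (hpt_in_K i) (PGjoin_subl _ _)).
  exact: PGjoin_line (hpt_PGpoint i) (genmx_rV_PGpoint sg0) (hpt_neq_Q i).
have onL : #|[set j | hpt j <= L]%MS| = s.
  rewrite -Ls -(card_imset _ hpt_inj); apply: eq_card => P; rewrite inE.
  apply/imsetP/andP => [[j]|[/in_K_hpt[j ->] jL]]; last by exists j; rewrite ?inE.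
  by rewrite inE => jL ->; rewrite hpt_in_K.
rewrite -onL (cardsD1 i [set j | hpt j <= L]%MS) inE PGjoin_subl add1n subSS subn0.
by apply: eq_card => j; rewrite !inE.
Qed.

Lemma card_wt2_fibre_at i : #|[set e in wt2_fibre | i \in supp e]| = (s - 1)%N.
Proof.
set Ei := [set e in _ | _].
transitivity (\sum_(e in Ei) #|[set j in predC1 i | j \in supp e]|)%N.
  rewrite -sum1_card; apply: eq_bigr => e; rewrite in_set => /andP[].
  rewrite in_set => /andP[we _] ie.
  have : wt e = (1 + #|supp e :\ i|)%N by rewrite /wt (cardsD1 i) ie.
  by rewrite (eqP we) add1n => -[->]; apply: eq_card => j; rewrite !inE.
have /= -> := sum_card_incidence Ei (predC1 i) (fun e j => j \in supp e).
rewrite -(card_join_Q_others i).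
rewrite (eq_card (B := [set j in predC1 i | hpt j <= PGjoin (hpt i) Q]%MS)) ?card_set_sum.
  apply: eq_bigr => j /= nji; rewrite -card_wt2_fibre_pair 1?eq_sym //.
  by apply: eq_card => e; rewrite !in_set andbA.
by move=> j; rewrite !inE.
Qed.

Lemma card_wt2_fibre : (#|wt2_fibre| * 2 = n * (s - 1))%N.
Proof.
rewrite -sum_nat_const.
transitivity (\sum_(e in wt2_fibre) #|[set i in [set: 'I_n] | i \in supp e]|)%N.
  apply: eq_bigr => e; rewrite in_set => /andP[/eqP we _]; rewrite -we.
  by apply: eq_card => i; rewrite !inE.
have /= -> := sum_card_incidence wt2_fibre [set: 'I_n] (fun e j => j \in supp e).
rewrite (eq_bigr (fun=> s - 1)%N); last first.
  by move=> i _; rewrite -(card_wt2_fibre_at i); apply: eq_card => e; rewrite !in_set.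
by rewrite sum_nat_const cardsT card_ord.
Qed.
End WeightTwoFibre.

Lemma dist_code_le_hdist x c : (c <= C)%MS -> (dist_code C x <= hdist x c)%N.
Proof. exact: bigminn_le_cond. Qed.

Lemma dist_code_ge m x : (m <= n)%N ->
  (forall c, (c <= C)%MS -> m <= hdist x c)%N -> (m <= dist_code C x)%N.
Proof.
move=> mn mc; apply: (big_ind (fun v => m <= v)%N) => // a b ma mb.
by rewrite leq_min ma mb.
Qed.

Lemma dist_code_le_wt x e : syndrome e = syndrome x -> (dist_code C x <= wt e)%N.
Proof.
move=> ex; have xeC : (x - e <= C)%MS by rewrite code_syndrome syndromeB ex subrr.
by rewrite (leq_trans (dist_code_le_hdist x xeC)) // hdist_wt subKr.
Qed.

Lemma dist_code_le1P x : (1 < n)%N ->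
  (dist_code C x <= 1)%N <-> syndrome x = 0 \/ <<syndrome x>>%MS \in K.
Proof.
move=> n1; apply: (iff_trans _ (wt_le1_syndromeP _)); split=> [le1|[e we ex]]; last first.
  exact: leq_trans (dist_code_le_wt ex) we.
pose near e := (wt e <= 1)%N && (syndrome e == syndrome x).
have [/existsP[e /andP[we /eqP ex]]|/existsPn far] := boolP [exists e, near e].
  by exists e.
suff : (2 <= dist_code C x)%N by rewrite leqNgt ltnS le1.
apply: dist_code_ge => // c; rewrite code_syndrome hdist_wt ltnNge => /eqP c0.
by have := far (x - c); rewrite /near syndromeB c0 subr0 eqxx andbT.
Qed.

Lemma dist_code_le2 x : (1 < s)%N -> (0 < n)%N -> (dist_code C x <= 2)%N.
Proof.
move=> s1 n0; have [le1|] := boolP ((syndrome x == 0) || (<<syndrome x>>%MS \in K)).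
  have [e we ex] : exists2 e, (wt e <= 1)%N & syndrome e = syndrome x.
    by apply/wt_le1_syndromeP; case/orP: le1 => [/eqP|]; [left|right].
  exact: leq_trans (dist_code_le_wt ex) (leq_trans we _).
rewrite negb_or => /andP[sx0 sxK].
have : (0 < #|wt2_fibre (syndrome x)|)%N.
  rewrite lt0n; apply/eqP => fibre0; have := card_wt2_fibre sx0 sxK.
  by rewrite fibre0 => /esym/eqP; rewrite muln_eq0 subn_eq0 leqNgt s1 orbF; case: n n0.
case/card_gt0P => e; rewrite inE => /andP[/eqP we /eqP ex].
by have := dist_code_le_wt ex; rewrite we.
Qed.

Lemma card_codewords_dist2 x : (1 < n)%N -> dist_code C x = 2%N ->
  #|[set c | (c <= C)%MS && (hdist x c == 2%N)]| = ((s - 1) * n %/ 2)%N.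
Proof.
move=> n1 dx2; have [sx0 sxK] : syndrome x != 0 /\ <<syndrome x>>%MS \notin K.
  have not_le1 : ~ (syndrome x = 0 \/ <<syndrome x>>%MS \in K).
    by move/(dist_code_le1P x n1); rewrite dx2.
  by split; apply/negP => h; apply: not_le1; [left; apply/eqP | right].
pose E := wt2_fibre (syndrome x).
have -> : [set c | (c <= C)%MS && (hdist x c == 2%N)] = [set x - e | e in E].
  apply/setP => c; rewrite inE; apply/andP/imsetP => [[cC xc]|[e]].
    exists (x - c); last by rewrite subKr.
    move: cC; rewrite code_syndrome => /eqP c0.
    by rewrite inE -hdist_wt xc syndromeB c0 subr0 !eqxx.
  rewrite inE => /andP[we /eqP ex] ->.
  by rewrite code_syndrome syndromeB ex subrr hdist_wt subKr.
rewrite card_imset; last exact: (can_inj (subKr x)).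
by rewrite mulnC -(card_wt2_fibre sx0 sxK) mulnK.
Qed.

Lemma rank_parity_check : spansPG K -> \rank H^T = 3%N.
Proof.
move=> /eqP Ksum; rewrite -[RHS]Ksum; apply: eqmx_rank; case: HK => _ _ <-.
rewrite big_imset /=; last by move=> i j _ _; apply: hpt_inj.
apply/andP; split; last by apply/sumsmx_subP => i _; rewrite hptE genmxE row_sub.
by apply/row_subP => i; rewrite (sumsmx_sup i) // hptE genmxE.
Qed.

Lemma rank_code : spansPG K -> \rank C = (n - 3)%N.
Proof. by move=> Kspan; rewrite mxrank_ker rank_parity_check. Qed.

Lemma syndrome_surjective sg : spansPG K -> exists x, syndrome x = sg.
Proof.
move=> Kspan; have /submxP[x ->] : (sg <= H^T)%MS.
  by apply: submx_full; rewrite /row_full rank_parity_check.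
by exists x.
Qed.

Lemma covering_radius_code : (1 < s)%N -> (1 < n)%N -> spansPG K -> K != pts ->
  covering_radius C = 2%N.
Proof.
move=> s1 n1 Kspan KnT; apply/eqP; rewrite eqn_leq; apply/andP; split.
  by apply/bigmax_leqP => x _; apply: dist_code_le2 => //; apply: ltnW.
have /subsetPn[R Rpts RK] : ~~ (pts \subset K) by rewrite eqEsubset Kpts in KnT.
have [x sx] := syndrome_surjective (nz_row R) Kspan.
apply: leq_trans (leq_bigmax x); rewrite ltnNge; apply/negP.
move/(dist_code_le1P x n1); rewrite sx genmx_nz_row // => -[/eqP|]; last exact/negP.
by rewrite (negbTE (nz_row_PGpoint_neq0 Rpts)).
Qed.

Lemma code_APMCF : (1 < s)%N -> (1 < n)%N -> spansPG K -> K != pts ->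
  APMCF 2%N ((s - 1) * n %/ 2)%N C.
Proof.
move=> s1 n1 Kspan KnT; split; first exact: covering_radius_code.
by move=> x; apply: card_codewords_dist2.
Qed.

Lemma hpt_sub_supp_others d i : syndrome d = 0 -> i \in supp d ->
  (hpt i <= \sum_(t in supp d :\ i) hpt t)%MS.
Proof.
move=> d0 id; have di : d 0 i != 0 by rewrite inE in id.
move: d0; rewrite (syndrome_supp_sub (subxx _)) (big_setD1 i id) /= => /eqP.
rewrite addr_eq0 => /eqP di_ri; rewrite hptE genmxE -(eqmx_scale _ di) di_ri eqmx_opp.
by apply: summx_sub_sums => t _; rewrite hptE genmxE scalemx_sub.
Qed.

Lemma wt_codeword_ge4 d : s = 2%N -> d != 0 -> syndrome d = 0 -> (4 <= wt d)%N.
Proof.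
move=> s2 d_neq0 d0; rewrite leqNgt; apply/negP => wd.
have [i id] : exists i, i \in supp d.
  apply/set0Pn; move: d_neq0; apply: contra_neq => supp0; apply/rowP => t; rewrite mxE.
  by apply/eqP; apply: contraFT (in_set0 t); rewrite -supp0 inE.
have := hpt_sub_supp_others d0 id; set T := supp d :\ i.
have Tle2 : (#|T| <= 2)%N by move: wd; rewrite /wt (cardsD1 i) id.
have iT : i \notin T by rewrite !inE eqxx.
move: Tle2 iT; rewrite leq_eqVlt ltnS leq_eqVlt ltnS leqn0.
case/or3P => [/cards2P[j [l [njl ->]]]|/cards1P[j ->]|/eqP/cards0_eq ->] iT.
- rewrite big_setU1 ?inE //= big_set1 => iL.
  have : hpt i \in meetL (PGjoin (hpt j) (hpt l)) K.
    by rewrite inE hpt_in_K /PGjoin genmxE iL.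
  rewrite (arc2_meet_join Kpts Karc) ?hpt_in_K ?(inj_eq hpt_inj) // !inE !(inj_eq hpt_inj).
  by rewrite !inE in iT; apply/negP.
- rewrite big_set1 => /(PGpoint_sub_eq (hpt_PGpoint i) (hpt_PGpoint j)) /hpt_inj ij.
  by rewrite ij inE eqxx in iT.
- by rewrite big_set0 submx0 -mxrank_eq0 (PGpoint_rank (hpt_PGpoint i)).
Qed.

(* [3 <= n] is only needed for the value n.+1 that [min_dist] takes on a trivial code. *)
Lemma min_dist_code_ge4 : s = 2%N -> (3 <= n)%N -> (4 <= min_dist C)%N.
Proof.
move=> s2 n3; apply: (big_ind (fun v => 4 <= v)%N) => //.
  by move=> a b; rewrite leq_min => -> ->.
move=> [c c'] /= /and3P[cC c'C ncc'].
rewrite hdist_wt wt_codeword_ge4 // ?subr_eq0 // syndromeB.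
by move: cC c'C; rewrite !code_syndrome => /eqP -> /eqP ->; rewrite subrr.
Qed.
End ParityCheck.

Theorem proposition5p1 (F : finFieldType) (v k q s n : nat) (K : {set 'M[F]_3}) :
  q = (2 ^ v)%N -> #|F| = q -> s = (2 ^ k)%N -> (1 <= k <= v)%N ->
  n = ((s - 1) * q + s)%N ->
  maximal_arc n s K ->
  let mu := (((s - 1) * n) %/ 2)%N in
  optimal_saturating_nset n K mu /\
  forall H : 'M[F]_(3, n), corresponds H K ->
    let C := code_of H in
    [/\ \rank C = (n - 3)%N,
        covering_radius C = 2%N,
        (s = 2%N -> PMCF 2 mu C) &
        ((4 <= s)%N -> APMCF 2 mu C)].
Proof.
move=> hq hF hs /andP[k1 kv] hn [Kpts cardK Karc] mu.
have s1 : (1 < s)%N by rewrite hs -[X in (X < _)%N](expn0 2) ltn_exp2l.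
have sF : (s <= #|F|)%N by rewrite hF hq hs leq_pexp2l.
have sn : (s < n)%N.
  by rewrite hn -{1}(add0n s) ltn_add2r muln_gt0 subn_gt0 s1 hq expn_gt0.
have n1 : (1 < n)%N := ltn_trans s1 sn.
have Kspan : spansPG K by apply: (arc_spansPG Kpts Karc); rewrite cardK.
have KnT : K != PGpoints F 2 by apply: (arc_neq_PGpoints Kpts Karc); rewrite ?cardK.
split.
  have secant Q : Q \in PGpoints F 2 :\: K -> secant_mult_sum K Q = mu.
    rewrite inE => /andP[QK Qpts]; have := secant_mult_sum_arc Kpts Karc Qpts QK.
    by rewrite /mu cardK => <-; rewrite mulKn.
  by split=> [|Q /secant //]; split=> // Q /secant ->.
move=> H HK C; have APM := code_APMCF Kpts Karc HK s1 n1 Kspan KnT.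
split=> //.
- exact: rank_code HK Kspan.
- exact: covering_radius_code Kpts Karc HK s1 n1 Kspan KnT.
- by move=> s2; split=> //; apply: (min_dist_code_ge4 Kpts Karc HK s2); rewrite -s2.
Qed.
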